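(* Let $g,h\in\mathbb F_q[x,y]$ be nonzero with $(x^l-1)(y^m-1)=g(x,y)h(x,y)$ in $\mathbb F_q[x,y]$, and let $C=\langle g\rangle$, $C^*=\langle h^*\rangle$ be the ideals of $\mathfrak R$ generated by the images of $g$ and $h^*$. Assume $C\neq\{0\}$ and $C^*\ne\{0\}$. Then $C\subseteq C^*$ if and only if $(x^l-1)(y^m-1)$ divides $g(x,y)g^*(x,y)$ in $\mathbb F_q[x,y]$.
   Context: $\mathfrak R=\mathbb F_q[x,y]/\langle x^l-1,y^m-1\rangle$. For nonzero $f\in\mathbb F_q[x,y]$ with $l_1=\deg_x f$, $l_2=\deg_y f$, the reciprocal polynomial is $f^*(x,y)=x^{l_1}y^{l_2}f(x^{-1},y^{-1})$. *)

(* F_q[x,y] is modelled as {poly {poly F}}: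
   the outer variable is y ('X), the inner variable is x ('X%:P). *)
From HB Require Import structures.
From mathcomp Require Import all_boot all_order all_algebra all_field.
Set Implicit Arguments. Unset Strict Implicit. Unset Printing Implicit Defensive.
Import GRing.Theory.
Local Open Scope ring_scope.

Section Bivariate.
Variable F : fieldType.

Definition xvar : {poly {poly F}} := ('X)%:P.
Definition yvar : {poly {poly F}} := 'X.

Definition degy (f : {poly {poly F}}) : nat := (size f).-1.
Definition degx (f : {poly {poly F}}) : nat := (\max_(j < size f) (size (f`_j)%R).-1)%N.

Definition bcoef (f : {poly {poly F}}) (i j : nat) : F := (f`_j)`_i.

(* reciprocal polynomial f^*(x,y) = x^{deg_x f} y^{deg_y f} f(1/x,1/y):
   its coefficient of x^i y^j is the coefficient of x^(l1-i) y^(l2-j) in f. *)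
Definition recip (f : {poly {poly F}}) : {poly {poly F}} :=
  \poly_(j < (degy f).+1) \poly_(i < (degx f).+1)
     bcoef f (degx f - i) (degy f - j).

(* congruence modulo the ideal <x^l - 1, y^m - 1>, i.e. equality in
   R = F[x,y]/<x^l-1, y^m-1> *)
Definition modR (l m : nat) (p q : {poly {poly F}}) : Prop :=
  exists u v : {poly {poly F}},
    p - q = u * (xvar ^+ l - 1) + v * (yvar ^+ m - 1).

(* the ideal <g> of R generated by the image of g, represented by the
   set of its preimages in F[x,y] *)
Definition idealR (l m : nat) (g : {poly {poly F}}) (p : {poly {poly F}}) : Prop :=
  exists a : {poly {poly F}}, modR l m p (a * g).

Definition idealR_nonzero (l m : nat) (g : {poly {poly F}}) : Prop :=
  exists p, idealR l m g p /\ ~ modR l m p 0.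

Definition idealR_sub (l m : nat) (g h : {poly {poly F}}) : Prop :=
  forall p, idealR l m g p -> idealR l m h p.

Definition bdvd (d p : {poly {poly F}}) : Prop := exists k, p = k * d.

End Bivariate.

(* Since g h = (x^l - 1)(y^m - 1) is separable, Gauss's lemma forces
   g = a(x) b(y) and h = a'(x) b'(y) with a a' ~ x^l - 1 and b b' ~ y^m - 1.
   Reciprocals are computed factorwise and x^l - 1 is self-reciprocal up to
   sign, so x^l - 1 divides a a^* iff a'^* divides a, and likewise in y.
   On the other side, C <= C^* means g = alpha h^* modulo (x^l - 1, y^m - 1);
   as C <> 0, y^m - 1 does not divide b, and comparing the coefficients of the
   remainders modulo y^m - 1 shows that a'^* divides a; symmetrically b'^*
   divides b. *)

From HB Require Import structures.
From mathcomp Require Import all_boot all_order all_algebra all_field.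
From mathcomp Require Import zify ring.
From Stdlib Require Import Classical.
Set Implicit Arguments. Unset Strict Implicit. Unset Printing Implicit Defensive.
Import GRing.Theory.
Local Open Scope ring_scope.

Section Reversal.
Variable R : nzRingType.
Implicit Types p q : {poly R}.

(* [revpn N p] is x^N p(1/x) when deg p <= N; higher coefficients are dropped. *)
Definition revpn (N : nat) p : {poly R} := \poly_(i < N.+1) p`_(N - i).

Definition revp p := revpn (size p).-1 p.

Lemma coef_revpn N p k : (revpn N p)`_k = if (k <= N)%N then p`_(N - k) else 0.
Proof. by rewrite coef_poly ltnS. Qed.

Lemma revpn0 N : revpn N 0 = 0.
Proof. by apply/polyP=> k; rewrite coef_revpn !coef0 if_same. Qed.

Lemma revpnD N p q : revpn N (p + q) = revpn N p + revpn N q.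
Proof. by apply/polyP=> k; rewrite coefD !coef_revpn coefD; case: ifP; rewrite ?addr0. Qed.

Lemma revpnZ N c p : revpn N (c *: p) = c *: revpn N p.
Proof. by apply/polyP=> k; rewrite coefZ !coef_revpn coefZ; case: ifP; rewrite ?mulr0. Qed.

Lemma revpnXnM a b i q : (i <= a)%N -> (size q <= b.+1)%N ->
  revpn (a + b) ('X^i * q) = 'X^(a - i) * revpn b q.
Proof.
move=> ia sq; apply/polyP=> k; rewrite coef_revpn !coefXnM coef_revpn.
case: (leqP k (a + b)) => kab; last first.
  by case: (ltnP k (a - i)) => // _; rewrite ifF //; apply/negbTE; rewrite -ltnNge; lia.
case: (ltnP (a + b - k) i) => h1.
  by case: (ltnP k (a - i)) => // _; rewrite ifF //; apply/negbTE; rewrite -ltnNge; lia.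
case: (ltnP k (a - i)) => h2.
  by rewrite nth_default //; apply: leq_trans sq _; lia.
by rewrite ifT; [congr (q`_ _); lia | lia].
Qed.

Lemma revpn_Xn a i : (i <= a)%N -> revpn a 'X^i = 'X^(a - i) :> {poly R}.
Proof.
move=> ia; apply/polyP=> k; rewrite coef_revpn !coefXn.
case: (leqP k a) => ka; first by congr (_%:R); apply/eqP/eqP; lia.
by rewrite (_ : (k == a - i)%N = false) //; apply/eqP; lia.
Qed.

Lemma revpnM a b p q : (size p <= a.+1)%N -> (size q <= b.+1)%N ->
  revpn (a + b) (p * q) = revpn a p * revpn b q.
Proof.
move=> sp sq; rewrite -[p]coefK poly_def mulr_suml.
rewrite !(big_morph (revpn _) (revpnD _) (revpn0 _)) mulr_suml.
apply: eq_bigr => i _; have ia : (i <= a)%N by rewrite -ltnS; apply: leq_trans (ltn_ord i) sp.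
by rewrite -scalerAl !revpnZ revpnXnM // revpn_Xn // scalerAl.
Qed.

Lemma revpn_XnsubC l : (0 < l)%N -> revpn l ('X^l - 1) = - ('X^l - 1).
Proof.
move=> l0; apply/polyP=> k; rewrite coef_revpn coefN !coefB !coefXn !coef1.
case: (leqP k l) => kl; last first.
  rewrite (_ : (k == l)%N = false); last by apply/eqP; lia.
  by rewrite (_ : (k == 0)%N = false) ?subrr ?oppr0 //; apply/eqP; lia.
have -> : (l - k == l)%N = (k == 0)%N by apply/eqP/eqP; lia.
have -> : (l - k == 0)%N = (k == l)%N by apply/eqP/eqP; lia.
by rewrite opprB.
Qed.

Lemma revp_eq0 p : (revp p == 0) = (p == 0).
Proof.
apply/eqP/eqP => [rp0 | ->]; last exact: revpn0.
have := coef_revpn (size p).-1 p 0; rewrite subn0 -lead_coefE -/(revp p) rp0 coef0.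
by move/esym/eqP; rewrite lead_coef_eq0 => /eqP.
Qed.

End Reversal.

Lemma revp_mul_XnsubC (R : idomainType) (a a' : {poly R}) c l :
  (0 < l)%N -> c != 0 -> a * a' = c *: ('X^l - 1) ->
  revp a * revp a' = (- c) *: ('X^l - 1).
Proof.
move=> l0 c0 e.
have : size (a * a') = l.+1 by rewrite e size_scale // -polyC1 size_XnsubC.
have [-> | a0] := eqVneq a 0; first by rewrite mul0r size_poly0.
have [-> | a'0] := eqVneq a' 0; first by rewrite mulr0 size_poly0.
rewrite size_mul // => saa'.
have sl : ((size a).-1 + (size a').-1)%N = l.
  by move: saa' (size_poly_gt0 a) (size_poly_gt0 a'); rewrite a0 a'0; lia.
by rewrite /revp -revpnM ?leqSpred // sl e revpnZ revpn_XnsubC // scalerN scaleNr.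
Qed.

Lemma dvdp_XnsubC_revp (F : fieldType) l c (a a' : {poly F}) :
  (0 < l)%N -> c != 0 -> a * a' = c *: ('X^l - 1) ->
  revp a' %| 'X^l - 1 /\ (forall p, ('X^l - 1 %| p * revp a) = (revp a' %| p)).
Proof.
move=> l0 c0 /(revp_mul_XnsubC l0 c0); set X := 'X^l - 1 => e.
have Nc0 : - c != 0 by rewrite oppr_eq0.
have X0 : X != 0 by rewrite -size_poly_gt0 /X -polyC1 size_XnsubC.
split=> [|p]; first by rewrite -(dvdpZr _ _ Nc0) -e dvdp_mulIr.
apply/idP/idP => [/dvdpP[k ek] | /dvdpP[k ->]]; last first.
  by rewrite -mulrA [revp a' * _]mulrC e -scalerAr dvdpZr // dvdp_mulIr.
have /(mulIf X0) ekp : (- c *: p) * X = (k * revp a') * X.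
  by rewrite -scalerAl scalerAr -e mulrA ek -!mulrA (mulrC X).
by rewrite -(dvdpZr _ _ Nc0) ekp dvdp_mulIr.
Qed.

Section SeparablePolynomials.
Variable F : fieldType.
Implicit Types (a b p W X Y Z : {poly F}) (k u v w : {poly {poly F}}).

(* [a%:P * b^:P] is the separable polynomial a(x) b(y). *)

Lemma sep_eq0 a b : (a%:P * b^:P == 0) = (a == 0) || (b == 0).
Proof. by rewrite mulf_eq0 polyC_eq0 map_poly_eq0. Qed.

Lemma coef_sep a b j : (a%:P * b^:P)`_j = a * (b`_j)%:P.
Proof. by rewrite coefCM coef_map. Qed.

Lemma sepM a b a' b' : (a%:P * b^:P) * (a'%:P * b'^:P) = (a * a')%:P * (b * b')^:P.
Proof. by rewrite !rmorphM /= mulrACA. Qed.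

Lemma swapXY_sep a b : swapXY (a%:P * b^:P) = b%:P * a^:P.
Proof. by rewrite rmorphM /= swapXY_polyC swapXY_map_polyC mulrC. Qed.

Lemma factor_map_polyC u v Z : u * v = Z^:P -> Z != 0 -> exists b, u = b^:P.
Proof.
move=> e Z0; have : size (swapXY u * swapXY v) == 1%N.
  by rewrite -rmorphM /= e swapXY_map_polyC size_polyC Z0.
rewrite size_mul_eq1 => /andP[/size_poly1P[b _ eb] _].
by exists b; rewrite -[u]swapXYK eb swapXY_polyC.
Qed.

Lemma irreducible_factor W : (1 < size W)%N -> exists2 p, irreducible_poly p & p %| W.
Proof.
elim: {W}(size W) {-2}W (leqnn (size W)) => [|n IH] W sW W1; first lia.
have [irrW | redW] := classic (irreducible_poly W); first by exists W.
have [q [sq1 qW nqW]] : exists q : {poly F}, [/\ size q != 1%N, q %| W & ~~ (q %= W)].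
  apply: NNPP => hn; apply: redW; split => // q sq qW.
  by apply/negPn/negP => nqW; apply: hn; exists q.
have W0 : W != 0 by rewrite -size_poly_gt0; lia.
have q0 : q != 0 by apply: contraTneq qW => ->; rewrite dvd0p.
have sqW : (size q < size W)%N by rewrite ltn_neqAle dvdp_leq // andbT dvdp_size_eqp.
have sq : (1 < size q)%N by move: (size_poly_gt0 q) sq1; rewrite q0; lia.
have [|//|p irr_p pq] := IH q; first lia.
by exists p => //; apply: dvdp_trans qW.
Qed.

Lemma irredp_dvd_coefM p u v : irreducible_poly p ->
  (forall j, p %| (u * v)`_j) -> (forall j, p %| u`_j) \/ (forall j, p %| v`_j).
Proof.
move=> irr_p puv; apply: NNPP => /not_or_and[/not_all_ex_not[i0 /negP pui0]].
move=> /not_all_ex_not[n0 /negP pvn0].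
have [i pui imin] := ex_minnP (ex_intro (fun i => ~~ (p %| u`_i)) i0 pui0).
have [n pvn nmin] := ex_minnP (ex_intro (fun n => ~~ (p %| v`_n)) n0 pvn0).
have := puv (i + n)%N; rewrite coefM (bigD1 (Ordinal (ltn_addr n (ltnSn i)))) //= addKn.
rewrite dvdp_addl ?Gauss_dvdpl ?irreducible_poly_coprime ?(negbTE pui) //.
apply: (big_ind (dvdp p)) => [||[j jn] /= neij]; [exact: dvdp0 | exact: dvdp_add |].
have nji : j != i := neij.
case: (ltnP j i) => [ji | ij].
  by apply/dvdp_mulr/negPn/negP => /imin; lia.
by apply/dvdp_mull/negPn/negP => /nmin; lia.
Qed.

Lemma coef_divpK p w : (forall j, p %| w`_j) -> w = p%:P * map_poly (fun c => c %/ p) w.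
Proof.
by move=> pw; apply/polyP => j; rewrite coefCM coef_map_id0 ?div0p // divpKC.
Qed.

Lemma factor_sep u v W Z : u * v = W%:P * Z^:P -> W != 0 -> Z != 0 ->
  exists a b, u = a%:P * b^:P.
Proof.
elim: {W}(size W) {-2}W (leqnn (size W)) u v => [|n IH] W sW u v e W0 Z0.
  by move: sW; rewrite leqn0 size_poly_eq0 (negbTE W0).
have [W1 | /irreducible_factor[p irr_p pW]] := leqP (size W) 1.
  have eW := size1_polyC W1; set c := W`_0 in eW.
  have /factor_map_polyC[|b ->] : u * v = (c *: Z)^:P.
    by rewrite e eW linearZ /= -mul_polyC.
    by rewrite scaler_eq0 negb_or -polyC_eq0 -eW W0.
  by exists 1, b; rewrite mul1r.
have p0 : p != 0 := irredp_neq0 irr_p.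
have eW : W%:P * Z^:P = p%:P * ((W %/ p)%:P * Z^:P).
  by rewrite mulrA -polyCM [p * _]mulrC divpK.
have W'0 : W %/ p != 0 by apply: contra_neq W0 => Wp0; rewrite -(divpK pW) Wp0 mul0r.
have sW' : (size (W %/ p)%R <= n)%N.
  case: irr_p => sp _; move: sW sp; rewrite size_divp //.
  by move: (size W) (size p) => sW sp; lia.
have puv j : p %| (u * v)`_j by rewrite e eW coefCM dvdp_mulIl.
have pC0 : p%:P != 0 by rewrite polyC_eq0.
case: (irredp_dvd_coefM irr_p puv) => [/coef_divpK eu | /coef_divpK ev].
  have [|a [b eab]] := IH _ sW' (map_poly (fun c => c %/ p) u) v _ W'0 Z0.
    by apply: (mulfI pC0); rewrite mulrA -eu e eW.
  by exists (p * a), b; rewrite eu eab polyCM mulrA.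
apply: (IH _ sW' u (map_poly (fun c => c %/ p) v)) => //.
by apply: (mulfI pC0); rewrite mulrCA -ev e eW.
Qed.

Lemma sep_eq_scalel a b X Y : a%:P * b^:P = X%:P * Y^:P -> X != 0 -> Y != 0 ->
  exists2 c, c != 0 & a = c *: X.
Proof.
move=> e X0 Y0; set j := (size Y).-1.
have Yj : Y`_j != 0 by rewrite -lead_coefE lead_coef_eq0.
have ej : a * (b`_j)%:P = X * (Y`_j)%:P by rewrite -!coef_sep e.
have bj : b`_j != 0.
  apply/eqP => bj0; move/eqP: ej.
  by rewrite bj0 mulr0 eq_sym mulf_eq0 polyC_eq0 (negbTE X0) (negbTE Yj).
exists (Y`_j / b`_j); first by rewrite mulf_neq0 ?invr_eq0.
by rewrite -[a]mulr1 -polyC1 -(mulfV bj) polyCM mulrA ej -mulrA -polyCM mulrC mul_polyC.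
Qed.

Lemma sep_eq_scaler a b X Y : a%:P * b^:P = X%:P * Y^:P -> X != 0 -> Y != 0 ->
  exists2 d, d != 0 & b = d *: Y.
Proof.
move=> e X0 Y0; apply: (sep_eq_scalel (b := a)) Y0 X0.
by rewrite -(swapXY_sep a) -(swapXY_sep X) e.
Qed.

Lemma size_sep a b : a != 0 -> size (a%:P * b^:P) = size b.
Proof. by move=> a0; rewrite size_Cmul ?polyC_eq0 // size_map_polyC. Qed.

Lemma degx_sep a b : a != 0 -> b != 0 -> degx (a%:P * b^:P) = (size a).-1.
Proof.
move=> a0 b0; rewrite /degx size_sep //.
have size_coef j : size (a%:P * b^:P)`_j = if b`_j == 0 then 0%N else size a.
  rewrite coef_sep mulrC mul_polyC.
  by case: eqP => [->|/eqP bj]; rewrite ?scale0r ?size_poly0 ?size_scale.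
apply/eqP; rewrite eqn_leq; apply/andP; split.
  by apply/bigmax_leqP => j _; rewrite size_coef; case: ifP.
have sb : ((size b).-1 < size b)%N by rewrite prednK // size_poly_gt0.
apply: leq_trans (leq_bigmax_cond (Ordinal sb) isT); rewrite /= size_coef.
by rewrite -lead_coefE lead_coef_eq0 (negbTE b0).
Qed.

Lemma recip_sep a b : a != 0 -> b != 0 ->
  recip (a%:P * b^:P) = (revp a)%:P * (revp b)^:P.
Proof.
move=> a0 b0; rewrite /recip degx_sep // /degy size_sep //.
apply/polyP => j; rewrite coef_poly coef_sep; apply/polyP => i.
rewrite coefMC /revp !coef_revpn ltnS.
case: (leqP j (size b).-1) => hj; last by rewrite coef0 mulr0.
rewrite coef_poly ltnS; case: (leqP i (size a).-1) => hi; last by rewrite mul0r.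
by rewrite /bcoef coef_sep coefMC.
Qed.

(* Reduce modulo the monic Y(y) and compare the coefficients of y^j, for j
   the degree of the nonzero remainder b %% Y. *)
Lemma dvdp_sep_mod X Y a b (a2 b2 : {poly F}) k u v :
  Y \is monic -> a2 %| X -> ~~ (Y %| b) ->
  a%:P * b^:P - k * (a2%:P * b2^:P) = u * X%:P + v * Y^:P -> a2 %| a.
Proof.
move=> mY a2X nYb e.
have mYP : Y^:P \is monic by apply: monic_map.
set r := b %% Y.
have hr : Pdiv.CommonRing.rmodp b^:P Y^:P = r^:P.
  rewrite {1}(divp_eq b Y) rmorphD rmorphM /= Pdiv.RingMonic.rmodp_addl_mul_small //.
  by rewrite !size_map_polyC ltn_modp monic_neq0.
have := congr1 (fun w => Pdiv.CommonRing.rmodp w Y^:P) e.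
rewrite /= (Pdiv.RingMonic.rmodpB mYP) !(Pdiv.RingMonic.rmodpD mYP).
rewrite (Pdiv.RingMonic.rmodp_mull mYP) addr0 mul_polyC (Pdiv.RingMonic.rmodpZ mYP) hr.
rewrite mulrCA mul_polyC (Pdiv.RingMonic.rmodpZ mYP).
rewrite (mulrC u) mul_polyC (Pdiv.RingMonic.rmodpZ mYP) => er.
have r0 : r != 0 by rewrite /r -/(dvdp Y b).
set j := (size r).-1; have rj : r`_j != 0 by rewrite /j -lead_coefE lead_coef_eq0.
have := congr1 (fun w : {poly {poly F}} => w`_j) er; rewrite /= coefB !coefZ coef_map /=.
move=> ej; have -> : a = (r`_j)^-1 *: (a * (r`_j)%:P).
  by rewrite mulrC mul_polyC scalerA mulVf // scale1r.
by rewrite dvdpZr ?invr_eq0 // (canRL (subrK _) ej) dvdp_add ?dvdp_mulr ?dvdp_mulIl.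
Qed.

Lemma dvdp_sepl X Y a b k : a%:P * b^:P = k * (X%:P * Y^:P) -> b != 0 -> X %| a.
Proof.
move=> e b0; set j := (size b).-1.
have bj : b`_j != 0 by rewrite /j -lead_coefE lead_coef_eq0.
have := congr1 (fun w : {poly {poly F}} => w`_j) e.
rewrite /= coef_sep mulrCA coefCM => ej.
have -> : a = (b`_j)^-1 *: (a * (b`_j)%:P).
  by rewrite mulrC mul_polyC scalerA mulVf // scale1r.
by rewrite dvdpZr ?invr_eq0 // ej dvdp_mulIl.
Qed.

Lemma bdvd_sep X Y a b : a != 0 -> b != 0 ->
  bdvd (X%:P * Y^:P) (a%:P * b^:P) <-> (X %| a) && (Y %| b).
Proof.
move=> a0 b0; split=> [[k ek] | /andP[/dvdpP[k1 ->] /dvdpP[k2 ->]]].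
  apply/andP; split; first exact: dvdp_sepl ek b0.
  apply: (@dvdp_sepl Y X b a (swapXY k)) a0.
  by rewrite -(swapXY_sep a) -(swapXY_sep X) -rmorphM /= ek.
by exists (k1%:P * k2^:P); rewrite sepM.
Qed.

End SeparablePolynomials.

Section IdealsOfR.
Variables (F : fieldType) (l m : nat).
Implicit Types (a b : {poly F}) (g h k : {poly {poly F}}).

Lemma xvar_XnsubC : xvar F ^+ l - 1 = ('X^l - 1)%:P.
Proof. by rewrite /xvar rmorphB /= rmorphXn rmorph1. Qed.

Lemma yvar_XnsubC : yvar F ^+ m - 1 = ('X^m - 1)^:P.
Proof. by rewrite /yvar rmorphB /= rmorphXn /= map_polyX rmorph1. Qed.

Lemma idealR_nonzero_modR g : idealR_nonzero l m g -> ~ modR l m g 0.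
Proof.
move=> [p [[k [u' [v' ep]]] np]] [u [v eg]]; apply: np.
exists (u' + k * u), (v' + k * v); rewrite subr0 in eg *.
by rewrite -(subrK (k * g) p) ep eg; ring.
Qed.

Lemma modR_sep_eq0 a b : ('X^l - 1 %| a) || ('X^m - 1 %| b) ->
  modR l m (a%:P * b^:P) 0.
Proof.
rewrite /modR xvar_XnsubC yvar_XnsubC subr0.
case/orP=> /dvdpP[k ->]; [exists (k%:P * b^:P), 0 | exists 0, (a%:P * k^:P)].
  by rewrite polyCM; ring.
by rewrite rmorphM; ring.
Qed.

Lemma idealR_sub_mull k h : idealR_sub l m (k * h) h.
Proof. by move=> p [a ep]; exists (a * k); rewrite -mulrA. Qed.

Lemma idealR_sub_sep a b (a2 b2 : {poly F}) : (0 < l)%N -> (0 < m)%N ->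
  ~ modR l m (a%:P * b^:P) 0 -> a2 %| 'X^l - 1 -> b2 %| 'X^m - 1 ->
  idealR_sub l m (a%:P * b^:P) (a2%:P * b2^:P) <-> (a2 %| a) && (b2 %| b).
Proof.
move=> l0 m0 g0 a2X b2Y; split=> [sub | /andP[/dvdpP[k1 ->] /dvdpP[k2 ->]]]; last first.
  by rewrite -sepM; apply: idealR_sub_mull.
have nXa : ~~ ('X^l - 1 %| a) by apply/negP => Xa; apply/g0/modR_sep_eq0; rewrite Xa.
have nYb : ~~ ('X^m - 1 %| b) by apply/negP => Yb; apply/g0/modR_sep_eq0; rewrite Yb orbT.
have /sub[k [u [v]]] : idealR l m (a%:P * b^:P) (a%:P * b^:P).
  by exists 1, 0, 0; rewrite mul1r subrr !mul0r addr0.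
rewrite xvar_XnsubC yvar_XnsubC => e; apply/andP; split.
  by apply: dvdp_sep_mod e; rewrite // -polyC1 monicXnsubC.
apply: (dvdp_sep_mod (b2 := a2) (k := swapXY k) (u := swapXY v) (v := swapXY u) _ b2Y nXa).
  by rewrite -polyC1 monicXnsubC.
move: (congr1 swapXY e); rewrite rmorphB rmorphD !rmorphM /=.
by rewrite !swapXY_polyC !swapXY_map_polyC (mulrC a^:P) (mulrC a2^:P) [swapXY u * _ + _]addrC.
Qed.

End IdealsOfR.

Theorem mainTheorem5 (F : finFieldType) (l m : nat) (g h : {poly {poly F}}) :
  g != 0 -> h != 0 ->
  (xvar F ^+ l - 1) * (yvar F ^+ m - 1) = g * h ->
  idealR_nonzero l m g ->
  idealR_nonzero l m (recip h) ->
  (idealR_sub l m g (recip h) <->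
   bdvd ((xvar F ^+ l - 1) * (yvar F ^+ m - 1)) (g * recip g)).
Proof.
move=> g0 h0; rewrite xvar_XnsubC yvar_XnsubC => e /idealR_nonzero_modR nzg _.
have : ('X^l - 1)%:P * ('X^m - 1)^:P != 0 :> {poly {poly F}} by rewrite e mulf_neq0.
rewrite sep_eq0 negb_or => /andP[X0 Y0].
have l0 : (0 < l)%N by rewrite lt0n; apply: contra_neq X0 => ->; rewrite expr0 subrr.
have m0 : (0 < m)%N by rewrite lt0n; apply: contra_neq Y0 => ->; rewrite expr0 subrr.
have [a [b eg]] := factor_sep (esym e) X0 Y0.
have [a' [b' eh]] : exists a' b', h = a'%:P * b'^:P.
  by apply: (factor_sep (v := g)) X0 Y0; rewrite mulrC -e.
subst g h; move: g0 h0; rewrite !sep_eq0 !negb_or => /andP[a0 b0] /andP[a'0 b'0].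
have eP : (a * a')%:P * (b * b')^:P = ('X^l - 1)%:P * ('X^m - 1)^:P by rewrite -sepM e.
have [c c0 /(dvdp_XnsubC_revp l0 c0)[a'X dvdX]] := sep_eq_scalel eP X0 Y0.
have [d d0 /(dvdp_XnsubC_revp m0 d0)[b'Y dvdY]] := sep_eq_scaler eP X0 Y0.
rewrite !recip_sep // sepM idealR_sub_sep // bdvd_sep ?mulf_neq0 ?revp_eq0 //.
by rewrite dvdX dvdY.
Qed.
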